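(* Let $m\neq n$ be positive integers and let $g,h\in\mathrm{Homeo}_+(S^1)$ satisfy $gh^mg^{-1}=h^n$. Then $h$ has a periodic point whose period divides $|n-m|$.
   Context: $\mathrm{Homeo}_+(S^1)$ is the group of orientation-preserving homeomorphisms of $S^1$. *)

(* The circle S^1 is modelled as R/Z, represented by [0,1). *)
From Stdlib Require Import Reals ZArith.
Open Scope R_scope.

Definition S1 : Type := {x : R | 0 <= x < 1}.

Definition S1val (x : S1) : R := proj1_sig x.

Definition cdist (x y : S1) : R :=
  Rmin (Rabs (S1val x - S1val y)) (1 - Rabs (S1val x - S1val y)).

Definition S1_continuous (f : S1 -> S1) : Prop :=
  forall (x : S1) (eps : R), 0 < eps ->
    exists delta, 0 < delta /\
      forall y : S1, cdist x y < delta -> cdist (f x) (f y) < eps.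

Definition cyc (x y z : S1) : Prop :=
  let a := S1val x in let b := S1val y in let c := S1val z in
  (a < b < c) \/ (b < c < a) \/ (c < a < b).

Definition homeo_plus (f : S1 -> S1) : Prop :=
  exists finv : S1 -> S1,
    (forall x, finv (f x) = x) /\ (forall y, f (finv y) = y) /\
    S1_continuous f /\ S1_continuous finv /\
    (forall x y z, cyc x y z -> cyc (f x) (f y) (f z)).

Definition has_period (h : S1 -> S1) (x : S1) (k : nat) : Prop :=
  (0 < k)%nat /\ Nat.iter k h x = x /\
  (forall j : nat, (0 < j < k)%nat -> Nat.iter j h x <> x).

From Stdlib Require Import Reals ZArith Lra Lia ProofIrrelevance Classical Wf_nat.
Open Scope R_scope.

(* Lift h and g to maps H, G of the real line commuting with x |-> x + 1; the
   relation g h^m g^-1 = h^n lifts to G o H^m = H^n o G + c for one integer c,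
   by continuity.  If h^d, d = |n - m|, had no fixed point, H^d x - x would
   avoid the integers, hence by compactness stay in some band
   [p + eps, p + 1 - eps], and H^(dN) x - x would lie between N (p + eps) and
   N (p + 1 - eps).  But iterating the semiconjugacy N times, and using that G
   and every H^j move points a bounded amount, shows that
   H^(nN) 0 - H^(mN) 0 + N c, which is +/- (H^(dN) y - y) + N c, stays bounded:
   impossible for N large.  A fixed point of h^d has least period dividing d.
   The continuity of the lifts follows from their monotonicity and
   surjectivity. *)

Lemma add_nat_mul (F : R -> R) (t s : R) :
  (forall x, F (x + t) = F x + s) ->
  forall (N : nat) x, F (x + INR N * t) = F x + INR N * s.
Proof.
  intros HF N; induction N as [|N IH]; intros x.
  - simpl; rewrite !Rmult_0_l, !Rplus_0_r; reflexivity.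
  - rewrite S_INR.
    replace (x + (INR N + 1) * t) with (x + INR N * t + t) by ring.
    rewrite HF, IH; ring.
Qed.

Lemma add_int_of_add1 (F : R -> R) (s : R) :
  (forall x, F (x + 1) = F x + s) ->
  forall (k : Z) x, F (x + IZR k) = F x + IZR k * s.
Proof.
  intros HF k x.
  assert (Hnat : forall N y, F (y + INR N) = F y + INR N * s).
  { intros N y; rewrite <- (Rmult_1_r (INR N)) at 1; exact (add_nat_mul F 1 s HF N y). }
  destruct (Z_le_gt_dec 0 k) as [Hk|Hk].
  - rewrite <- (Z2Nat.id k Hk), <- INR_IZR_INZ; apply Hnat.
  - assert (HN : INR (Z.to_nat (- k)) = - IZR k)
      by (rewrite INR_IZR_INZ, Z2Nat.id, opp_IZR by lia; reflexivity).
    pose proof (Hnat (Z.to_nat (- k)) (x + IZR k)) as E.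
    rewrite HN in E; replace (x + IZR k + - IZR k) with x in E by ring.
    lra.
Qed.

Lemma iter_mul {A : Type} (f : A -> A) (p q : nat) (x : A) :
  Nat.iter (p * q) f x = Nat.iter p (Nat.iter q f) x.
Proof.
  induction p as [|p IH]; [reflexivity|].
  simpl Nat.iter; rewrite <- IH, <- Nat.iter_add; reflexivity.
Qed.

Lemma iter_continuity (f : R -> R) (j : nat) :
  continuity f -> continuity (Nat.iter j f).
Proof.
  intros Hf; induction j as [|j IH]; simpl.
  - exact (derivable_continuous _ derivable_id).
  - exact (continuity_comp (Nat.iter j f) f IH Hf).
Qed.

Lemma Rabs_le_inv (a b : R) : Rabs a <= b -> - b <= a <= b.
Proof. unfold Rabs; destruct Rcase_abs; lra. Qed.

Lemma frac_part_range (x : R) : 0 <= frac_part x < 1.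
Proof. pose proof (base_fp x); lra. Qed.

Lemma Int_part_add_int (x : R) (k : Z) : Int_part (x + IZR k) = (Int_part x + k)%Z.
Proof.
  symmetry; apply Int_part_spec.
  pose proof (base_Int_part x); rewrite plus_IZR; lra.
Qed.

Lemma frac_part_add_int (x : R) (k : Z) : frac_part (x + IZR k) = frac_part x.
Proof. unfold frac_part; rewrite Int_part_add_int, plus_IZR; ring. Qed.

Lemma frac_part_id (x : R) : 0 <= x < 1 -> frac_part x = x.
Proof.
  intros Hx; unfold frac_part.
  rewrite <- (Int_part_spec x 0) by (simpl; lra); simpl; ring.
Qed.

Lemma IVT_value (f : R -> R) (a b t : R) :
  continuity f -> (f a - t) * (f b - t) <= 0 -> exists z, f z = t.
Proof.
  intros Hf Hab.
  assert (Hft : continuity (fun x => f x - t))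
    by (apply continuity_minus; [exact Hf | apply continuity_const; now intros ? ?]).
  destruct (Rle_dec a b) as [Hle|Hgt].
  - destruct (IVT_cor _ a b Hft Hle Hab) as [z [_ Hz]]; exists z; lra.
  - destruct (IVT_cor _ b a Hft ltac:(lra) ltac:(lra)) as [z [_ Hz]]; exists z; lra.
Qed.

Lemma IZR_neq_add_half (j k : Z) : IZR k <> IZR j + / 2.
Proof.
  intros E.
  assert (H : 0 < IZR (k - j) < 1) by (rewrite minus_IZR; lra).
  destruct H as [H0 H1]; apply lt_IZR in H0; apply lt_IZR in H1; lia.
Qed.

Lemma int_valued_constant (f : R -> R) :
  continuity f -> (forall x, exists k, f x = IZR k) -> forall x, f x = f 0.
Proof.
  intros Hf Hint x.
  destruct (Hint 0) as [j Hj], (Hint x) as [k Hk].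
  destruct (Z.eq_dec k j) as [<-|Hne]; [congruence|exfalso].
  set (l := if Z_lt_le_dec j k then j else (j - 1)%Z).
  assert (Hl : (f 0 - (IZR l + / 2)) * (f x - (IZR l + / 2)) <= 0).
  { rewrite Hj, Hk; unfold l; destruct Z_lt_le_dec.
    - assert (IZR j + 1 <= IZR k) by (rewrite <- plus_IZR; apply IZR_le; lia). nra.
    - assert (IZR k + 1 <= IZR j) by (rewrite <- plus_IZR; apply IZR_le; lia).
      rewrite minus_IZR; nra. }
  destruct (IVT_value f 0 x _ Hf Hl) as [z Hz].
  destruct (Hint z) as [m Hm]; apply (IZR_neq_add_half l m); congruence.
Qed.

Lemma periodic_extrema (f : R -> R) :
  continuity f -> (forall x, f (x + 1) = f x) ->
  exists a b, forall x, f a <= f x <= f b.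
Proof.
  intros Hf Hper.
  destruct (continuity_ab_min f 0 1 ltac:(lra) (fun c _ => Hf c)) as [a [Ha _]].
  destruct (continuity_ab_maj f 0 1 ltac:(lra) (fun c _ => Hf c)) as [b [Hb _]].
  exists a, b; intros x.
  assert (Hfrac : f x = f (frac_part x)).
  { rewrite (Rplus_Int_part_frac_part x) at 1; rewrite Rplus_comm.
    rewrite (add_int_of_add1 f 0) by (intros y; rewrite Hper; ring); ring. }
  pose proof (frac_part_range x).
  rewrite Hfrac; split; [apply Ha | apply Hb]; lra.
Qed.

Lemma periodic_avoiding_integers_band (f : R -> R) :
  continuity f -> (forall x, f (x + 1) = f x) -> (forall x k, f x <> IZR k) ->
  exists (p : Z) (eps : R), 0 < eps /\
    forall x, IZR p + eps <= f x <= IZR p + 1 - eps.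
Proof.
  intros Hf Hper Hnint.
  set (p := Int_part (f 0)).
  assert (Hp : forall x, IZR p < f x < IZR p + 1).
  { assert (H0 : IZR p < f 0 < IZR p + 1).
    { pose proof (base_Int_part (f 0)) as Hb; fold p in Hb; pose proof (Hnint 0 p); lra. }
    intros x; split; apply Rnot_le_lt; intros Hx.
    - destruct (IVT_value f 0 x (IZR p) Hf ltac:(nra)) as [z Hz].
      exact (Hnint z p Hz).
    - destruct (IVT_value f 0 x (IZR (p + 1)) Hf ltac:(rewrite plus_IZR; nra)) as [z Hz].
      exact (Hnint z (p + 1)%Z Hz). }
  destruct (periodic_extrema f Hf Hper) as [a [b Hab]].
  exists p, (Rmin (f a - IZR p) (IZR p + 1 - f b)); split.
  - apply Rmin_pos; pose proof (Hp a); pose proof (Hp b); lra.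
  - intros x; pose proof (Hab x);
      pose proof (Rmin_l (f a - IZR p) (IZR p + 1 - f b));
      pose proof (Rmin_r (f a - IZR p) (IZR p + 1 - f b)); lra.
Qed.

Lemma displacement_bounded (f : R -> R) :
  continuity f -> (forall x, f (x + 1) = f x + 1) ->
  exists K : Z, forall x, Rabs (f x - x) <= IZR K.
Proof.
  intros Hf Hadd.
  assert (Hcont : continuity (fun x => f x - x))
    by exact (continuity_minus _ _ Hf (derivable_continuous _ derivable_id)).
  destruct (periodic_extrema _ Hcont) as [a [b Hab]];
    [intros x; rewrite Hadd; ring|].
  exists (up (Rabs (f a - a) + Rabs (f b - b))); intros x.
  pose proof (archimed (Rabs (f a - a) + Rabs (f b - b))) as [Hup _].
  pose proof (Hab x); pose proof (Rle_abs (f b - b)); pose proof (Rabs_pos (f b - b)).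
  pose proof (Rle_abs (- (f a - a))); rewrite Rabs_Ropp in *; pose proof (Rabs_pos (f a - a)).
  apply Rabs_le; lra.
Qed.

Lemma iter_displacement_band (f : R -> R) (a b : R) :
  (forall x, a <= f x - x <= b) ->
  forall (N : nat) x, INR N * a <= Nat.iter N f x - x <= INR N * b.
Proof.
  intros Hf N x; induction N as [|N IH].
  - simpl; lra.
  - rewrite S_INR; simpl Nat.iter; pose proof (Hf (Nat.iter N f x)); lra.
Qed.

Lemma linear_band_unbounded (q : Z) (eps C : R) (v : nat -> R) :
  0 < eps -> (forall N, Rabs (v N) <= C) ->
  (forall N, INR N * (IZR q + eps) <= v N <= INR N * (IZR q + 1 - eps)) -> False.
Proof.
  intros Heps Hbd Hband.
  destruct (INR_archimed eps C Heps) as [N HN].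
  pose proof (Hband N); pose proof (Rabs_le_inv _ _ (Hbd N)); pose proof (pos_INR N).
  destruct (Z_le_gt_dec 0 q) as [Hq|Hq].
  - apply IZR_le in Hq; nra.
  - assert (IZR q + 1 <= 0) by (rewrite <- plus_IZR; apply IZR_le; lia); nra.
Qed.

Lemma increasing_surjective_continuous (f : R -> R) :
  (forall x y, x < y -> f x < f y) -> (forall w, exists x, f x = w) -> continuity f.
Proof.
  intros Hinc Hsurj x eps Heps.
  destruct (Hsurj (f x - eps)) as [x0 Hx0], (Hsurj (f x + eps)) as [x1 Hx1].
  assert (Hlt : forall y z, f y < f z -> y < z).
  { intros y z Hyz; destruct (Rlt_le_dec y z) as [|[Hzy|<-]]; [easy| |lra].
    pose proof (Hinc _ _ Hzy); lra. }
  assert (x0 < x) by (apply Hlt; lra); assert (x < x1) by (apply Hlt; lra).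
  exists (Rmin (x1 - x) (x - x0)); split; [apply Rmin_pos; lra|].
  intros z [_ Hz]; simpl in *; unfold R_dist in *.
  pose proof (Rmin_l (x1 - x) (x - x0)); pose proof (Rmin_r (x1 - x) (x - x0)).
  apply Rabs_def2 in Hz.
  pose proof (Hinc z x1 ltac:(lra)); pose proof (Hinc x0 z ltac:(lra)).
  apply Rabs_def1; lra.
Qed.

Section DegreeOneMaps.

Variable H : R -> R.
Hypothesis H_cont : continuity H.
Hypothesis H_nondecr : forall x y, x <= y -> H x <= H y.
Hypothesis H_add1 : forall x, H (x + 1) = H x + 1.

Lemma iter_add1 (j : nat) x : Nat.iter j H (x + 1) = Nat.iter j H x + 1.
Proof. induction j as [|j IH]; simpl; [reflexivity | now rewrite IH]. Qed.

Lemma iter_add_int (j : nat) (k : Z) x :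
  Nat.iter j H (x + IZR k) = Nat.iter j H x + IZR k.
Proof. rewrite (add_int_of_add1 _ 1 (iter_add1 j)); ring. Qed.

Lemma iter_nondecr (j : nat) x y : x <= y -> Nat.iter j H x <= Nat.iter j H y.
Proof. induction j as [|j IH]; simpl; auto. Qed.

Lemma iter_dist_le (j : nat) (K : Z) x y :
  Rabs (y - x) <= IZR K -> Rabs (Nat.iter j H y - Nat.iter j H x) <= IZR K.
Proof.
  intros Hyx; apply Rabs_le_inv in Hyx.
  pose proof (iter_nondecr j y (x + IZR K) ltac:(lra)) as Hup.
  pose proof (iter_nondecr j (x + IZR (- K)) y ltac:(rewrite opp_IZR; lra)) as Hlo.
  rewrite iter_add_int in Hup, Hlo; rewrite opp_IZR in Hlo.
  apply Rabs_le; lra.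
Qed.

Lemma iter_displacement_band_of_no_integer_shift (d : nat) :
  (forall x k, Nat.iter d H x <> x + IZR k) ->
  exists (p : Z) (eps : R), 0 < eps /\ forall (N : nat) x,
    INR N * (IZR p + eps) <= Nat.iter (N * d) H x - x <= INR N * (IZR p + 1 - eps).
Proof.
  intros Hshift.
  destruct (periodic_avoiding_integers_band (fun x => Nat.iter d H x - x))
    as [p [eps [Heps Hband]]].
  - exact (continuity_minus _ _ (iter_continuity H d H_cont)
                             (derivable_continuous _ derivable_id)).
  - intros x; rewrite iter_add1; ring.
  - intros x k E; apply (Hshift x k); lra.
  - exists p, eps; split; [exact Heps|]; intros N x.
    rewrite iter_mul; exact (iter_displacement_band _ _ _ Hband N x).
Qed.

Variable G : R -> R.
Hypothesis G_cont : continuity G.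
Hypothesis G_add1 : forall x, G (x + 1) = G x + 1.

Section Semiconjugacy.

Variables (m n : nat) (c : Z).
Hypothesis semiconj : forall x, G (Nat.iter m H x) = Nat.iter n H (G x) + IZR c.

Lemma iter_semiconj (N : nat) x :
  G (Nat.iter (N * m) H x) = Nat.iter (N * n) H (G x) + INR N * IZR c.
Proof.
  induction N as [|N IH]; [simpl; ring|].
  simpl Nat.mul; rewrite S_INR, !Nat.iter_add, semiconj, IH.
  replace (INR N * IZR c) with (IZR (Z.of_nat N * c))
    by (rewrite mult_IZR, <- INR_IZR_INZ; ring).
  rewrite iter_add_int, mult_IZR, <- INR_IZR_INZ; ring.
Qed.

Lemma semiconj_gap_bounded :
  exists C, forall N : nat,
    Rabs (Nat.iter (N * n) H 0 - Nat.iter (N * m) H 0 + INR N * IZR c) <= C.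
Proof.
  destruct (displacement_bounded G G_cont G_add1) as [K HK].
  exists (2 * IZR K); intros N.
  set (u := Nat.iter (N * m) H 0).
  pose proof (iter_semiconj N 0) as Hu; fold u in Hu.
  pose proof (iter_dist_le (N * n) K 0 (G 0) (HK 0)) as Hw.
  pose proof (Rabs_le_inv _ _ (HK u)); apply Rabs_le_inv in Hw.
  apply Rabs_le; lra.
Qed.

End Semiconjugacy.

Lemma semiconj_forces_integer_shift (m n d : nat) (c : Z) :
  (n = m + d \/ m = n + d)%nat ->
  (forall x, G (Nat.iter m H x) = Nat.iter n H (G x) + IZR c) ->
  exists x (k : Z), Nat.iter d H x = x + IZR k.
Proof.
  intros Hnm Hsemi; apply NNPP; intros Hno.
  destruct (iter_displacement_band_of_no_integer_shift d) as [p [eps [Heps Hband]]].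
  { intros x k E; apply Hno; exists x, k; exact E. }
  destruct (semiconj_gap_bounded m n c Hsemi) as [C HC].
  set (v := fun N => Nat.iter (N * n) H 0 - Nat.iter (N * m) H 0 + INR N * IZR c).
  destruct Hnm as [-> | ->].
  - apply (linear_band_unbounded (p + c) eps C v Heps HC); intros N.
    unfold v; replace (N * (m + d))%nat with (N * d + N * m)%nat by lia.
    rewrite Nat.iter_add, plus_IZR.
    pose proof (Hband N (Nat.iter (N * m) H 0)); lra.
  - apply (linear_band_unbounded (c - p - 1) eps C v Heps HC); intros N.
    unfold v; replace (N * (n + d))%nat with (N * d + N * n)%nat by lia.
    rewrite Nat.iter_add, !minus_IZR.
    pose proof (Hband N (Nat.iter (N * n) H 0)); lra.
Qed.

End DegreeOneMaps.

Definition S1_of_R (x : R) : S1 := exist _ (frac_part x) (frac_part_range x).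

Lemma S1_eq (s t : S1) : S1val s = S1val t -> s = t.
Proof.
  destruct s as [s Hs], t as [t Ht]; simpl; intros <-.
  f_equal; apply proof_irrelevance.
Qed.

Lemma S1val_range (s : S1) : 0 <= S1val s < 1.
Proof. exact (proj2_sig s). Qed.

Lemma S1_of_R_val (s : S1) : S1_of_R (S1val s) = s.
Proof. apply S1_eq; exact (frac_part_id _ (S1val_range s)). Qed.

Lemma S1val_S1_of_R_0 : S1val (S1_of_R 0) = 0.
Proof. exact fp_R0. Qed.

Lemma S1_of_R_add_int (x : R) (k : Z) : S1_of_R (x + IZR k) = S1_of_R x.
Proof. apply S1_eq; exact (frac_part_add_int x k). Qed.

Lemma S1_of_R_eq (x y : R) : S1_of_R x = S1_of_R y -> exists k : Z, x = y + IZR k.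
Proof.
  intros E; apply (f_equal S1val) in E; simpl in E; unfold frac_part in E.
  exists (Int_part x - Int_part y)%Z; rewrite minus_IZR; lra.
Qed.

Definition unwrap (a v : R) : R := if Rle_dec a v then v else v + 1.

(* The lift of f normalised by lift f 0 = S1val (f 0): on [k, k + 1) it takes
   values in [a + k, a + k + 1), where a = S1val (f 0). *)
Definition lift (f : S1 -> S1) (x : R) : R :=
  unwrap (S1val (f (S1_of_R 0))) (S1val (f (S1_of_R x))) + IZR (Int_part x).

Lemma lift_S1_of_R (f : S1 -> S1) (x : R) : S1_of_R (lift f x) = f (S1_of_R x).
Proof.
  rewrite <- (S1_of_R_val (f (S1_of_R x))); unfold lift, unwrap.
  destruct Rle_dec; rewrite S1_of_R_add_int; [reflexivity|].
  change 1 with (IZR 1); apply S1_of_R_add_int.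
Qed.

Lemma lift_add1 (f : S1 -> S1) (x : R) : lift f (x + 1) = lift f x + 1.
Proof.
  unfold lift; change 1 with (IZR 1).
  rewrite S1_of_R_add_int, Int_part_add_int, plus_IZR; ring.
Qed.

Lemma lift_iter (f : S1 -> S1) (j : nat) (x : R) :
  S1_of_R (Nat.iter j (lift f) x) = Nat.iter j f (S1_of_R x).
Proof. apply Nat.iter_swap_gen, lift_S1_of_R. Qed.

Section LiftOfOrientationPreservingBijection.

Variables f finv : S1 -> S1.
Hypothesis finv_f : forall x, finv (f x) = x.
Hypothesis f_finv : forall y, f (finv y) = y.
Hypothesis f_cyc : forall x y z, cyc x y z -> cyc (f x) (f y) (f z).

Let a := S1val (f (S1_of_R 0)).

Lemma unwrap_f_increasing (s t : S1) :
  S1val s < S1val t -> unwrap a (S1val (f s)) < unwrap a (S1val (f t)).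
Proof.
  intros Hst.
  pose proof (S1val_range s); pose proof (S1val_range (f s)).
  pose proof (S1val_range (f t)); pose proof (S1val_range (f (S1_of_R 0))).
  unfold unwrap, a.
  destruct (Req_dec (S1val s) 0) as [Hs0|Hs0].
  - assert (s = S1_of_R 0) as -> by (apply S1_eq; rewrite S1val_S1_of_R_0; exact Hs0).
    assert (S1val (f t) <> S1val (f (S1_of_R 0))).
    { intros E; apply S1_eq, (f_equal finv) in E; rewrite !finv_f in E.
      rewrite E, S1val_S1_of_R_0 in Hst; lra. }
    destruct Rle_dec, Rle_dec; lra.
  - assert (Hcyc : cyc (S1_of_R 0) s t)
      by (unfold cyc; rewrite S1val_S1_of_R_0; left; pose proof (S1val_range s); lra).
    apply f_cyc in Hcyc; unfold cyc in Hcyc.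
    destruct Rle_dec, Rle_dec; lra.
Qed.

Lemma lift_increasing (x y : R) : x < y -> lift f x < lift f y.
Proof.
  intros Hxy; unfold lift; fold a.
  pose proof (base_Int_part x); pose proof (base_Int_part y).
  assert (Hxy_int : (Int_part x <= Int_part y)%Z)
    by (apply Z.lt_succ_r, lt_IZR; rewrite succ_IZR; lra).
  pose proof (S1val_range (f (S1_of_R 0))).
  destruct (Z.eq_dec (Int_part x) (Int_part y)) as [E|E].
  - rewrite E; apply Rplus_lt_compat_r, unwrap_f_increasing; simpl.
    unfold frac_part; rewrite E; lra.
  - assert (IZR (Int_part x) + 1 <= IZR (Int_part y))
      by (rewrite <- succ_IZR; apply IZR_le; lia).
    unfold unwrap; destruct Rle_dec, Rle_dec;
      pose proof (S1val_range (f (S1_of_R x)));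
      pose proof (S1val_range (f (S1_of_R y))); lra.
Qed.

Lemma lift_surjective (w : R) : exists x, lift f x = w.
Proof.
  set (t := S1val (finv (S1_of_R w))).
  assert (Ht : lift f t = unwrap a (frac_part w)).
  { unfold lift, t; fold a; rewrite S1_of_R_val, f_finv.
    rewrite <- (Int_part_spec _ 0) by (pose proof (S1val_range (finv (S1_of_R w))); simpl; lra).
    apply Rplus_0_r. }
  pose proof (Rplus_Int_part_frac_part w) as Hw.
  assert (Hlift_int : forall k : Z, lift f (t + IZR k) = lift f t + IZR k)
    by (intros k; rewrite (add_int_of_add1 _ 1 (lift_add1 f)); ring).
  unfold unwrap in Ht; destruct Rle_dec.
  - exists (t + IZR (Int_part w)); rewrite Hlift_int, Ht; lra.
  - exists (t + IZR (Int_part w - 1)); rewrite Hlift_int, Ht, minus_IZR; lra.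
Qed.

Lemma lift_continuous : continuity (lift f).
Proof. exact (increasing_surjective_continuous _ lift_increasing lift_surjective). Qed.

Lemma lift_nondecr (x y : R) : x <= y -> lift f x <= lift f y.
Proof. intros [Hlt| ->]; [left; exact (lift_increasing x y Hlt) | right; reflexivity]. Qed.

End LiftOfOrientationPreservingBijection.

Lemma lift_semiconj (g ginv h hinv : S1 -> S1) (m n : nat) :
  (forall x, ginv (g x) = x) -> (forall y, g (ginv y) = y) ->
  (forall x y z, cyc x y z -> cyc (g x) (g y) (g z)) ->
  (forall x, hinv (h x) = x) -> (forall y, h (hinv y) = y) ->
  (forall x y z, cyc x y z -> cyc (h x) (h y) (h z)) ->
  (forall y, g (Nat.iter m h y) = Nat.iter n h (g y)) ->
  exists c : Z, forall x,
    lift g (Nat.iter m (lift h) x) = Nat.iter n (lift h) (lift g x) + IZR c.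
Proof.
  intros ginv_g g_ginv g_cyc hinv_h h_hinv h_cyc Hsemi.
  set (gap := fun x => lift g (Nat.iter m (lift h) x) - Nat.iter n (lift h) (lift g x)).
  assert (Hgap_cont : continuity gap).
  { pose proof (lift_continuous g ginv ginv_g g_ginv g_cyc) as Hg.
    pose proof (lift_continuous h hinv hinv_h h_hinv h_cyc) as Hh.
    apply continuity_minus.
    - exact (continuity_comp _ _ (iter_continuity _ m Hh) Hg).
    - exact (continuity_comp _ _ Hg (iter_continuity _ n Hh)). }
  assert (Hgap_int : forall x, exists k, gap x = IZR k).
  { intros x; destruct (S1_of_R_eq (lift g (Nat.iter m (lift h) x))
                                   (Nat.iter n (lift h) (lift g x))) as [k Hk].
    - rewrite lift_S1_of_R, !lift_iter, lift_S1_of_R; apply Hsemi.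
    - exists k; unfold gap; lra. }
  destruct (Hgap_int 0) as [c Hc]; exists c; intros x.
  pose proof (int_valued_constant gap Hgap_cont Hgap_int x); unfold gap in *; lra.
Qed.

Lemma has_period_dividing (h : S1 -> S1) (y : S1) (d : nat) :
  (0 < d)%nat -> Nat.iter d h y = y -> exists k, has_period h y k /\ Nat.divide k d.
Proof.
  intros Hd Hy.
  destruct (dec_inh_nat_subset_has_unique_least_element
              (fun j => (0 < j)%nat /\ Nat.iter j h y = y))
    as [k [[[Hk Hky] Hmin] _]].
  - intros j; apply classic.
  - exists d; split; assumption.
  - assert (Hper : has_period h y k).
    { split; [exact Hk|]; split; [exact Hky|].
      intros j Hj Hjy; pose proof (Hmin j (conj (proj1 Hj) Hjy)); lia. }
    exists k; split; [exact Hper|].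
    assert (Hqk : Nat.iter (d / k * k) h y = y).
    { rewrite iter_mul; apply (Nat.iter_invariant _ _ _ (fun z => z = y)); [|reflexivity].
      intros z ->; exact Hky. }
    assert (Hr : Nat.iter (d mod k) h y = y).
    { rewrite <- Hqk at 1; rewrite <- Nat.iter_add.
      pose proof (Nat.div_mod_eq d k).
      replace (d mod k + d / k * k)%nat with d by lia; exact Hy. }
    apply Nat.Lcm0.mod_divide.
    destruct (Nat.eq_dec (d mod k) 0) as [|Hne]; [assumption|].
    pose proof (Nat.mod_upper_bound d k ltac:(lia)).
    pose proof (Hmin _ (conj (proj1 (Nat.neq_0_lt_0 _) Hne) Hr)); lia.
Qed.

Theorem lemma5p5 (m n : nat) (g ginv h : S1 -> S1) :
  (0 < m)%nat -> (0 < n)%nat -> m <> n ->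
  homeo_plus g -> homeo_plus h ->
  (forall x, ginv (g x) = x) -> (forall y, g (ginv y) = y) ->
  (forall x, g (Nat.iter m h (ginv x)) = Nat.iter n h x) ->
  exists (x : S1) (k : nat), has_period h x k /\
    (Z.of_nat k | Z.abs (Z.of_nat n - Z.of_nat m))%Z.
Proof.
  intros Hm Hn Hmn [_ [_ [_ [_ [_ g_cyc]]]]] [hinv [hinv_h [h_hinv [_ [_ h_cyc]]]]]
    ginv_g g_ginv Hconj.
  set (d := (n - m + (m - n))%nat).
  assert (Hsemi : forall y, g (Nat.iter m h y) = Nat.iter n h (g y))
    by (intros y; rewrite <- Hconj, ginv_g; reflexivity).
  destruct (lift_semiconj g ginv h hinv m n ginv_g g_ginv g_cyc hinv_h h_hinv h_cyc Hsemi)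
    as [c Hc].
  destruct (semiconj_forces_integer_shift (lift h)
              (lift_continuous h hinv hinv_h h_hinv h_cyc)
              (lift_nondecr h hinv hinv_h h_cyc) (lift_add1 h)
              (lift g) (lift_continuous g ginv ginv_g g_ginv g_cyc) (lift_add1 g)
              m n d c ltac:(lia) Hc) as [x [k Hx]].
  assert (Hfix : Nat.iter d h (S1_of_R x) = S1_of_R x)
    by (rewrite <- lift_iter, Hx; apply S1_of_R_add_int).
  destruct (has_period_dividing h (S1_of_R x) d ltac:(lia) Hfix) as [k' [Hper [q Hq]]].
  exists (S1_of_R x), k'; split; [exact Hper|].
  exists (Z.of_nat q); lia.
Qed.
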